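(* Assume (A1), (A2) and (A3). Then for Method (BCV): (i) the number of changes of the inner index $k$ at each stage $l$ is finite (so the sequence $\{z^l\}_{l\ge0}$ is well defined); (ii) the sequence $\{z^l\}$ has limit points, and every limit point $\bar z$ belongs to $D$ and solves the variational inequality: there exists $\bar g\in\partial^{\uparrow}f(\bar z)$ with $\langle\bar g,x-\bar z\rangle\ge0$ for all $x\in D$; (iii) if in addition $f$ is semi-convex on $X$, then $\lim_{l\to\infty}f(z^l)=f^*$ and every limit point of $\{z^l\}$ belongs to $D^*$.
   Context: Setting: limit problem $\min_{x\in D}f(x)$ with $D=\{x\in X:\langle a,x\rangle=\beta\}$, $X=\prod_{i=1}^n[\alpha'_i,\alpha''_i]$; $f^*=\inf_{x\in D}f(x)$ and $D^*$ is its solution set. Approximating problems $\min_{x\in D_l}f_l(x)$, $l=0,1,2,\dots$, with $D_l=\{x\in X_l:\langle a^l,x\rangle=\beta_l\}$, $X_l=\prod_{i=1}^n[\alpha'_{il},\alpha''_{il}]$, $a^l=(a_{1l},\dots,a_{nl})^\top$. (A1): $D\ne\varnothing$, $X$ bounded, $a_i>0$ for all $i\in I=\{1,\dots,n\}$, and $f:\mathbb{R}^n\to\mathbb{R}$ is Lipschitz continuous in a neighborhood of every point of $X$. (A2): for each $l$, $D_l\neq\varnothing$, $a_{il}>0$ and $-\infty<\alpha'_{il}<\alpha''_{il}<+\infty$ for all $i$; and $\alpha'_{il}\to\alpha'_i$, $\alpha''_{il}\to\alpha''_i$, $a^l\to a$, $\beta_l\to\beta$ as $l\to\infty$. (A3):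 each $f_l$ is continuously differentiable on (a neighborhood of) $X_l$, and whenever $y^l\in D_l$ and $y^l\to\bar y$, the gradients satisfy $\nabla f_l(y^l)\to\bar g$ for some $\bar g\in\partial^{\uparrow}f(\bar y)$. Clarke notions: $f^{\uparrow}(x;p)=\limsup_{y\to x,\ \alpha\searrow0}(f(y+\alpha p)-f(y))/\alpha$ and $\partial^{\uparrow}f(x)=\{g:\langle g,p\rangle\le f^{\uparrow}(x;p)\ \forall p\}$. $f$ is semi-convex on $X$ if for all $x,y\in X$, $f^{\uparrow}(x;y-x)\ge0$ implies $f(y)\ge f(x)$. Notation: $g_{il}(x)=\partial f_l(x)/\partial x_i$, $h_{il}(x)=g_{il}(x)/a_{il}$; given positive sequence $\{\varepsilon_l\}$, $I_l^-(x)=\{i\in I: x_i\ge\alpha'_{il}+\varepsilon_l/a_{il}\}$, $I_l^+(x)=\{i\in I: x_i\le\alpha''_{il}-\varepsilon_l/a_{il}\}$; $\pi_V$ is Euclidean projection onto $V$. Method (BCV): choose $z^0\in D_0$, $\sigma\in(0,1)$, $\theta\in(0,1)$, positive sequences $\delta_l\searrow0$, $\varepsilon_l\searrow0$; set $l=1$. Stage $l$: set $k=0$, $x^0=\pi_{D_l}(z^{l-1})$. Step 1: if there exist $i\in I_l^-(x^k)$, $j\in I_l^+(x^k)$ with $h_{il}(x^k)-h_{jl}(x^k)\ge\delta_l$, choose any such pair, set $i_k=i$, $j_k=j$, $\gamma_k=\min\{a_{il}(x^k_i-\alpha'_{il}),\,a_{jl}(\alpha''_{jl}-x^k_j)\}$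 and go to Step 2; otherwise set $z^l=x^k$, $l:=l+1$ and start the next stage. Step 2: define $d^k$ by $d^k_i=-1/a_{il}$, $d^k_j=1/a_{jl}$, $d^k_s=0$ for $s\ne i,j$; let $m$ be the smallest nonnegative integer with $f_l(x^k+\theta^m\gamma_kd^k)\le f_l(x^k)+\sigma\theta^m\gamma_k\langle\nabla f_l(x^k),d^k\rangle$; set $\lambda_k=\theta^m\gamma_k$, $x^{k+1}=x^k+\lambda_kd^k$, $k:=k+1$, and return to Step 1. *)

(* classical reals. Vectors of R^n are represented as
   functions nat -> R of which only the coordinates 0..n-1 matter
   (all norms, inner products, boxes and limits only look at i < n). *)
From Stdlib Require Import Reals Lra Lia Relations.
Open Scope R_scope.

Definition vec := nat -> R.

Fixpoint sumR (n : nat) (u : nat -> R) : R :=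
  match n with O => 0 | S m => sumR m u + u m end.

Definition dot (n : nat) (u v : vec) : R := sumR n (fun i => u i * v i).
Definition vadd (u v : vec) : vec := fun i => u i + v i.
Definition vsub (u v : vec) : vec := fun i => u i - v i.
Definition vscal (c : R) (u : vec) : vec := fun i => c * u i.
Definition norm (n : nat) (u : vec) : R := sqrt (sumR n (fun i => u i ^ 2)).
Definition dist (n : nat) (u v : vec) : R := norm n (vsub u v).

Definition inbox (n : nat) (lo hi : vec) (x : vec) : Prop :=
  forall i, (i < n)%nat -> lo i <= x i <= hi i.

Definition feas (n : nat) (lo hi a : vec) (b : R) (x : vec) : Prop :=
  inbox n lo hi x /\ dot n a x = b.

Definition loc_lipschitz (n : nat) (f : vec -> R) (x : vec) : Prop :=
  exists L r, 0 < r /\ forall y z, dist n y x < r -> dist n z x < r ->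
    Rabs (f y - f z) <= L * dist n y z.

(* c <= f^(x;p) = limsup_{y -> x, t \searrow 0} (f(y+tp) - f y)/t  (literally) *)
Definition clarke_ge (n : nat) (f : vec -> R) (x p : vec) (c : R) : Prop :=
  forall e, 0 < e -> forall r, 0 < r -> exists y t,
    dist n y x < r /\ 0 < t < r /\ c - e <= (f (vadd y (vscal t p)) - f y) / t.

Definition clarke_subdiff (n : nat) (f : vec -> R) (x g : vec) : Prop :=
  forall p, clarke_ge n f x p (dot n g p).

Definition semiconvex_on (n : nat) (f : vec -> R) (lo hi : vec) : Prop :=
  forall x y, inbox n lo hi x -> inbox n lo hi y ->
    clarke_ge n f x (vsub y x) 0 -> f x <= f y.

Definition frechet (n : nat) (F : vec -> R) (x g : vec) : Prop :=
  forall e, 0 < e -> exists r, 0 < r /\ forall h, norm n h < r ->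
    Rabs (F (vadd x h) - F x - dot n g h) <= e * norm n h.

Definition vcont_at (n : nat) (G : vec -> vec) (x : vec) : Prop :=
  forall e, 0 < e -> exists r, 0 < r /\ forall y, dist n y x < r ->
    dist n (G y) (G x) < e.

Definition C1_near_box (n : nat) (F : vec -> R) (G : vec -> vec) (lo hi : vec) : Prop :=
  exists r, 0 < r /\ forall x0 y, inbox n lo hi x0 -> dist n y x0 < r ->
    frechet n F y (G y) /\ vcont_at n G y.

Definition vcv (n : nat) (u : nat -> vec) (v : vec) : Prop :=
  forall e, 0 < e -> exists N, forall k, (N <= k)%nat -> dist n (u k) v < e.

Definition cluster (n : nat) (u : nat -> vec) (v : vec) : Prop :=
  forall e, 0 < e -> forall N, exists k, (N <= k)%nat /\ dist n (u k) v < e.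

Definition is_proj (n : nat) (S : vec -> Prop) (y p : vec) : Prop :=
  S p /\ forall q, S q -> dist n y p <= dist n y q.

Definition is_inf_on (f : vec -> R) (S : vec -> Prop) (m : R) : Prop :=
  (forall x, S x -> m <= f x) /\
  (forall e, 0 < e -> exists x, S x /\ f x < m + e).

(* Data of the approximating problems: lol l = alpha'_{.l}, hil l = alpha''_{.l},
   al l = a^l, betal l = beta_l, fl l = f_l, gf l = grad f_l. *)

Definition hq (gf : nat -> vec -> vec) (al : nat -> vec) (l : nat) (x : vec) (i : nat) : R :=
  gf l x i / al l i.

Definition Iminus (n : nat) (lol al : nat -> vec) (eps : nat -> R) (l : nat) (x : vec) (i : nat) : Prop :=
  (i < n)%nat /\ lol l i + eps l / al l i <= x i.

Definition Iplus (n : nat) (hil al : nat -> vec) (eps : nat -> R) (l : nat) (x : vec) (j : nat) : Prop :=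
  (j < n)%nat /\ x j <= hil l j - eps l / al l j.

Definition eligible (n : nat) (lol hil al : nat -> vec) (gf : nat -> vec -> vec)
  (dlt eps : nat -> R) (l : nat) (x : vec) (i j : nat) : Prop :=
  Iminus n lol al eps l x i /\ Iplus n hil al eps l x j /\
  hq gf al l x i - hq gf al l x j >= dlt l.

Definition dir (al : nat -> vec) (l i j : nat) : vec :=
  fun s => if Nat.eqb s i then - / al l i
           else if Nat.eqb s j then / al l j else 0.

Definition gam (lol hil al : nat -> vec) (l : nat) (x : vec) (i j : nat) : R :=
  Rmin (al l i * (x i - lol l i)) (al l j * (hil l j - x j)).

Definition armijo (n : nat) (al : nat -> vec) (fl : nat -> vec -> R) (gf : nat -> vec -> vec)
  (sigma : R) (l : nat) (x : vec) (i j : nat) (lam : R) : Prop :=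
  fl l (vadd x (vscal lam (dir al l i j)))
    <= fl l x + sigma * lam * dot n (gf l x) (dir al l i j).

(* one pass Step 1 -> Step 2 (k -> k+1) of stage l *)
Definition bcv_step (n : nat) (lol hil al : nat -> vec) (fl : nat -> vec -> R)
  (gf : nat -> vec -> vec) (sigma theta : R) (dlt eps : nat -> R) (l : nat)
  (x x' : vec) : Prop :=
  exists i j, eligible n lol hil al gf dlt eps l x i j /\
    exists m : nat,
      armijo n al fl gf sigma l x i j (theta ^ m * gam lol hil al l x i j) /\
      (forall m', (m' < m)%nat ->
         ~ armijo n al fl gf sigma l x i j (theta ^ m' * gam lol hil al l x i j)) /\
      x' = vadd x (vscal (theta ^ m * gam lol hil al l x i j) (dir al l i j)).

Definition bcv_stop (n : nat) (lol hil al : nat -> vec) (gf : nat -> vec -> vec)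
  (dlt eps : nat -> R) (l : nat) (x : vec) : Prop :=
  ~ exists i j, eligible n lol hil al gf dlt eps l x i j.

(* the whole stage l: from z = z^{l-1} to z' = z^l *)
Definition bcv_stage (n : nat) (lol hil al : nat -> vec) (betal : nat -> R)
  (fl : nat -> vec -> R) (gf : nat -> vec -> vec) (sigma theta : R)
  (dlt eps : nat -> R) (l : nat) (z z' : vec) : Prop :=
  exists x0, is_proj n (feas n (lol l) (hil l) (al l) (betal l)) z x0 /\
    clos_refl_trans vec (bcv_step n lol hil al fl gf sigma theta dlt eps l) x0 z' /\
    bcv_stop n lol hil al gf dlt eps l z'.

(* z is a possible value of z^l produced by the method started at z0 *)
Inductive bcv_gen (n : nat) (lol hil al : nat -> vec) (betal : nat -> R)
  (fl : nat -> vec -> R) (gf : nat -> vec -> vec) (sigma theta : R)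
  (dlt eps : nat -> R) (z0 : vec) : nat -> vec -> Prop :=
| bcv_gen0 : bcv_gen n lol hil al betal fl gf sigma theta dlt eps z0 O z0
| bcv_genS : forall l z z',
    bcv_gen n lol hil al betal fl gf sigma theta dlt eps z0 l z ->
    bcv_stage n lol hil al betal fl gf sigma theta dlt eps (S l) z z' ->
    bcv_gen n lol hil al betal fl gf sigma theta dlt eps z0 (S l) z'.

(** Within a stage the Armijo steps decrease f_l, and near any point of D_l the continuity
    of the gradient bounds the accepted step lengths from below; an infinite stage would
    therefore decrease f_l by a fixed amount infinitely often near a cluster point of its
    iterates, contradicting continuity of f_l there.  At a limit point zb of the z^l the
    stopping test, with delta_l, eps_l -> 0 and the gradient limit of (A3) (taken along a
    sequence of D_l that follows the z^l on the convergent subsequence), yields a Clarke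
    subgradient gb with gb_i/a_i <= gb_j/a_j whenever zb_i > alpha'_i and zb_j < alpha''_j.
    A multiplier mu separating these ratios turns this into the variational inequality on D.
    Under semi-convexity every limit point then minimises f on D, so f is constant on the
    limit points and f(z^l) -> f^*. *)

From Stdlib Require Import Reals Relations Lra Lia.
From Stdlib Require Import Classical ClassicalEpsilon FunctionalExtensionality.
Open Scope R_scope.

(** * Finite sums and Euclidean geometry *)

Lemma sumR_ext n u v : (forall i, (i < n)%nat -> u i = v i) -> sumR n u = sumR n v.
Proof.
  induction n as [|n IH]; intros H; simpl; auto.
  rewrite IH, H by (first [lia | intros; apply H; lia]). reflexivity.
Qed.

Lemma sumR_plus n u v : sumR n (fun i => u i + v i) = sumR n u + sumR n v.
Proof. induction n; simpl; [lra|]. rewrite IHn. lra. Qed.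

Lemma sumR_scal n c u : sumR n (fun i => c * u i) = c * sumR n u.
Proof. induction n; simpl; [lra|]. rewrite IHn. lra. Qed.

Lemma sumR_minus n u v : sumR n (fun i => u i - v i) = sumR n u - sumR n v.
Proof. induction n; simpl; [lra|]. rewrite IHn. lra. Qed.

Lemma sumR_le n u v : (forall i, (i < n)%nat -> u i <= v i) -> sumR n u <= sumR n v.
Proof.
  induction n as [|n IH]; intros H; simpl; [lra|].
  pose proof (H n ltac:(lia)). pose proof (IH ltac:(intros; apply H; lia)). lra.
Qed.

Lemma sumR_zero n u : (forall i, (i < n)%nat -> u i = 0) -> sumR n u = 0.
Proof.
  induction n as [|n IH]; intros H; simpl; auto.
  rewrite IH, H by (first [lia | intros; apply H; lia]). lra.
Qed.

Lemma sumR_nonneg n u : (forall i, (i < n)%nat -> 0 <= u i) -> 0 <= sumR n u.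
Proof. intros H. rewrite <- (sumR_zero n (fun _ => 0)) by auto. now apply sumR_le. Qed.

Lemma sumR_term_le n u i :
  (forall s, (s < n)%nat -> 0 <= u s) -> (i < n)%nat -> u i <= sumR n u.
Proof.
  induction n as [|n IH]; intros H Hi; simpl; [lia|].
  pose proof (H n ltac:(lia)).
  destruct (Nat.eq_dec i n) as [->|Hin].
  - pose proof (sumR_nonneg n u ltac:(intros; apply H; lia)). lra.
  - pose proof (IH ltac:(intros; apply H; lia) ltac:(lia)). lra.
Qed.

Lemma sumR_single n u i :
  (i < n)%nat -> (forall s, (s < n)%nat -> s <> i -> u s = 0) -> sumR n u = u i.
Proof.
  induction n as [|n IH]; intros Hi H; simpl; [lia|].
  destruct (Nat.eq_dec i n) as [->|Hin].
  - rewrite sumR_zero by (intros; apply H; lia). lra.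
  - rewrite IH, (H n) by (first [lia | intros; apply H; lia]). lra.
Qed.

Lemma sumR_two n u i j : (i < n)%nat -> (j < n)%nat -> i <> j ->
  (forall s, (s < n)%nat -> s <> i -> s <> j -> u s = 0) -> sumR n u = u i + u j.
Proof.
  intros Hi Hj Hij H.
  rewrite (sumR_ext n u (fun s => (if Nat.eqb s i then u s else 0)
                                 + (if Nat.eqb s i then 0 else u s)))
    by (intros s _; destruct (Nat.eqb s i); ring).
  rewrite sumR_plus, (sumR_single n _ i), (sumR_single n _ j); auto.
  - rewrite Nat.eqb_refl, (proj2 (Nat.eqb_neq j i)) by auto. reflexivity.
  - intros s Hs Hsj. destruct (Nat.eqb_spec s i); auto.
  - intros s Hs Hsi. destruct (Nat.eqb_spec s i); [lia|auto].
Qed.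

Lemma sumR_cv n (u : nat -> nat -> R) c :
  (forall i, (i < n)%nat -> Un_cv (fun k => u k i) (c i)) ->
  Un_cv (fun k => sumR n (u k)) (sumR n c).
Proof.
  induction n as [|n IH]; intros H; simpl.
  - intros e He. exists O. intros. unfold Rdist. rewrite Rminus_diag, Rabs_R0. auto.
  - apply CV_plus; [apply IH; intros; apply H|apply H]; lia.
Qed.

Lemma dot_scal_r n g c d : dot n g (vscal c d) = c * dot n g d.
Proof. unfold dot, vscal. rewrite <- sumR_scal. apply sumR_ext. intros; ring. Qed.

Lemma dot_vsub_l n u v d : dot n (vsub u v) d = dot n u d - dot n v d.
Proof. unfold dot, vsub. rewrite <- sumR_minus. apply sumR_ext. intros; ring. Qed.

Lemma dot_vsub_r n g u v : dot n g (vsub u v) = dot n g u - dot n g v.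
Proof. unfold dot, vsub. rewrite <- sumR_minus. apply sumR_ext. intros; ring. Qed.

Lemma dot_vadd_scal_r n g x t d : dot n g (vadd x (vscal t d)) = dot n g x + t * dot n g d.
Proof.
  unfold dot, vadd, vscal. rewrite <- sumR_scal, <- sumR_plus. apply sumR_ext. intros; ring.
Qed.

Lemma dot_le_pos_l n a u v :
  (forall i, (i < n)%nat -> 0 < a i /\ u i <= v i) -> dot n a u <= dot n a v.
Proof. intros H. apply sumR_le. intros i Hi. destruct (H i Hi). nra. Qed.

Lemma dot_cv n (a w : nat -> vec) a0 v :
  (forall i, (i < n)%nat -> Un_cv (fun k => a k i) (a0 i)) ->
  (forall i, (i < n)%nat -> Un_cv (fun k => w k i) (v i)) ->
  Un_cv (fun k => dot n (a k) (w k)) (dot n a0 v).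
Proof. intros Ha Hw. apply (sumR_cv n (fun k i => a k i * w k i)). auto using CV_mult. Qed.

Lemma norm_nonneg n u : 0 <= norm n u.
Proof. apply sqrt_pos. Qed.

Lemma norm_ext n u v : (forall i, (i < n)%nat -> u i = v i) -> norm n u = norm n v.
Proof. intros H. unfold norm. f_equal. apply sumR_ext. intros; rewrite H; auto. Qed.

Lemma sumsq_nonneg n u : 0 <= sumR n (fun i => u i ^ 2).
Proof. apply sumR_nonneg. intros. nra. Qed.

Lemma norm_sq n u : norm n u ^ 2 = sumR n (fun i => u i ^ 2).
Proof. apply pow2_sqrt, sumsq_nonneg. Qed.

Lemma coord_le_norm n u i : (i < n)%nat -> Rabs (u i) <= norm n u.
Proof.
  intros Hi. unfold norm. rewrite <- sqrt_Rsqr_abs. apply sqrt_le_1_alt.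
  unfold Rsqr. replace (u i * u i) with (u i ^ 2) by ring.
  apply (sumR_term_le n (fun k => u k ^ 2)); auto. intros; nra.
Qed.

Lemma norm_le_sum_abs n u : norm n u <= sumR n (fun i => Rabs (u i)).
Proof.
  assert (Hpos : forall m, 0 <= sumR m (fun i => Rabs (u i)))
    by (intros; apply sumR_nonneg; intros; apply Rabs_pos).
  unfold norm. rewrite <- (sqrt_Rsqr (sumR n (fun i => Rabs (u i)))) by auto.
  apply sqrt_le_1_alt. unfold Rsqr. induction n as [|n IH]; cbn [sumR]; [lra|].
  pose proof (Hpos n). pose proof (Rabs_pos (u n)). pose proof (pow2_abs (u n)). nra.
Qed.

Lemma norm_scal n c u : norm n (vscal c u) = Rabs c * norm n u.
Proof.
  unfold norm, vscal. rewrite (sumR_ext n _ (fun i => c ^ 2 * u i ^ 2)) by (intros; ring).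
  rewrite sumR_scal, sqrt_mult by (nra || apply sumsq_nonneg).
  f_equal. rewrite <- sqrt_Rsqr_abs. unfold Rsqr. f_equal. ring.
Qed.

Lemma dot_le_norm_mul n u v : Rabs (dot n u v) <= norm n u * norm n v.
Proof.
  set (A := sumR n (fun i => u i ^ 2)). set (B := dot n u v).
  set (C := sumR n (fun i => v i ^ 2)).
  (* the discriminant of the nonnegative quadratic [t |-> |u + t v|^2] *)
  assert (Hq : forall t, 0 <= A + 2 * t * B + t ^ 2 * C).
  { intros t. pose proof (sumsq_nonneg n (fun i => u i + t * v i)) as H.
    rewrite (sumR_ext n _ (fun i => u i ^ 2 + ((2 * t) * (u i * v i) + t ^ 2 * v i ^ 2)))
      in H by (intros; ring).
    rewrite !sumR_plus, !sumR_scal in H. unfold A, B, C, dot. lra. }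
  assert (HA : 0 <= A) by apply sumsq_nonneg. assert (HC : 0 <= C) by apply sumsq_nonneg.
  assert (HB : B * B <= A * C).
  { destruct (Req_dec C 0) as [HC0|HC0].
    - destruct (Req_dec B 0) as [HB0|HB0]; [rewrite HB0; nra|].
      specialize (Hq (- (A + 1) / (2 * B))). rewrite HC0 in Hq.
      replace (A + 2 * (- (A + 1) / (2 * B)) * B + (- (A + 1) / (2 * B)) ^ 2 * 0)
        with (-1) in Hq by (field; auto). lra.
    - specialize (Hq (- B / C)).
      replace (A + 2 * (- B / C) * B + (- B / C) ^ 2 * C) with ((A * C - B * B) / C) in Hq
        by (field; auto).
      apply Rmult_le_compat_r with (r := C) in Hq; [|lra].
      unfold Rdiv in Hq. rewrite Rmult_assoc, Rinv_l in Hq by lra. lra. }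
  unfold norm. fold A C. rewrite <- sqrt_mult, <- sqrt_Rsqr_abs by auto.
  apply sqrt_le_1_alt. unfold Rsqr. lra.
Qed.

Lemma norm_triangle n u v : norm n (vadd u v) <= norm n u + norm n v.
Proof.
  assert (H : norm n (vadd u v) ^ 2 <= (norm n u + norm n v) ^ 2).
  { replace ((norm n u + norm n v) ^ 2)
      with (norm n u ^ 2 + 2 * (norm n u * norm n v) + norm n v ^ 2) by ring.
    rewrite !norm_sq. unfold vadd.
    rewrite (sumR_ext n _ (fun i => u i ^ 2 + (2 * (u i * v i) + v i ^ 2))) by (intros; ring).
    rewrite !sumR_plus, sumR_scal.
    pose proof (dot_le_norm_mul n u v). pose proof (Rle_abs (dot n u v)). unfold dot in *. lra. }
  pose proof (norm_nonneg n (vadd u v)). pose proof (norm_nonneg n u).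
  pose proof (norm_nonneg n v). nra.
Qed.

Lemma dist_nonneg n u v : 0 <= dist n u v.
Proof. apply norm_nonneg. Qed.

Lemma dist_refl n u : dist n u u = 0.
Proof. unfold dist, norm. rewrite sumR_zero, sqrt_0; auto. intros; unfold vsub; ring. Qed.

Lemma dist_triangle n u v w : dist n u w <= dist n u v + dist n v w.
Proof.
  unfold dist. rewrite (norm_ext n _ (vadd (vsub u v) (vsub v w)))
    by (intros; unfold vsub, vadd; ring).
  apply norm_triangle.
Qed.

Lemma dist_sym n u v : dist n u v = dist n v u.
Proof.
  unfold dist. rewrite (norm_ext n _ (vscal (-1) (vsub v u)))
    by (intros; unfold vsub, vscal; ring).
  rewrite norm_scal, Rabs_left by lra. ring.
Qed.

Lemma coord_le_dist n u v i : (i < n)%nat -> Rabs (u i - v i) <= dist n u v.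
Proof. apply (coord_le_norm n (vsub u v)). Qed.

Lemma dist_line n x c d : dist n (vadd x (vscal c d)) x = Rabs c * norm n d.
Proof. rewrite <- norm_scal. apply norm_ext. intros; unfold vsub, vadd, vscal; ring. Qed.

(** * Sequences, subsequences and compactness *)

Lemma cv_const c : Un_cv (fun _ => c) c.
Proof. intros e He. exists O. intros. unfold Rdist. rewrite Rminus_diag, Rabs_R0. auto. Qed.

Lemma cv_eventually_lt u w a b : Un_cv u a -> Un_cv w b -> a < b ->
  exists N, forall k, (N <= k)%nat -> u k < w k.
Proof.
  intros Hu Hw Hab.
  destruct (Hu ((b - a) / 2)) as [N1 H1]; [lra|]. destruct (Hw ((b - a) / 2)) as [N2 H2]; [lra|].
  exists (max N1 N2). intros k Hk. specialize (H1 k ltac:(lia)). specialize (H2 k ltac:(lia)).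
  unfold Rdist in *. apply Rabs_def2 in H1. apply Rabs_def2 in H2. lra.
Qed.

Lemma cv_le_eventually u w a b N : Un_cv u a -> Un_cv w b ->
  (forall k, (N <= k)%nat -> u k <= w k) -> a <= b.
Proof.
  intros Hu Hw H. apply Rnot_lt_le. intros Hlt.
  destruct (cv_eventually_lt w u b a Hw Hu Hlt) as [M HM].
  specialize (H (max N M) ltac:(lia)). specialize (HM (max N M) ltac:(lia)). lra.
Qed.

Lemma cv_of_dominated u x v : (forall k, Rabs (u k - x) <= v k) -> Un_cv v 0 -> Un_cv u x.
Proof.
  intros H Hv e He. destruct (Hv e He) as [N HN]. exists N. intros k Hk.
  specialize (HN k Hk). unfold Rdist in *. rewrite Rminus_0_r in HN.
  specialize (H k). pose proof (Rle_abs (v k)). lra.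
Qed.

Lemma cv_abs_sub u c : Un_cv u c -> Un_cv (fun k => Rabs (u k - c)) 0.
Proof.
  intros H e He. destruct (H e He) as [N HN]. exists N. intros k Hk.
  unfold Rdist in *. rewrite Rminus_0_r, Rabs_Rabsolu. auto.
Qed.

Lemma cv_inv u b : Un_cv u b -> b <> 0 -> Un_cv (fun k => / u k) (/ b).
Proof.
  intros Hu Hb. apply (continuity_seq Rinv u b); auto.
  apply (continuity_pt_inv (fun x => x) b); auto.
  apply derivable_continuous_pt, derivable_pt_id.
Qed.

Lemma cv_bounded u c : Un_cv u c -> exists B, forall k, Rabs (u k) <= B.
Proof. intros H. destruct (maj_by_pos u (exist _ c H)) as [B [_ HB]]. eauto. Qed.

Lemma inv_INR_S_small e : 0 < e -> exists N, forall k, (N <= k)%nat -> / INR (S k) < e.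
Proof.
  intros He. destruct (archimed_cor1 e He) as [N [HN HN0]]. exists N. intros k Hk.
  eapply Rle_lt_trans; [|apply HN].
  apply Rinv_le_contravar; [apply lt_0_INR; lia|apply le_INR; lia].
Qed.

Lemma vcv_of_coords n u v :
  (forall i, (i < n)%nat -> Un_cv (fun k => u k i) (v i)) -> vcv n u v.
Proof.
  intros H.
  assert (Hs : Un_cv (fun k => sumR n (fun i => Rabs (u k i - v i))) 0).
  { rewrite <- (sumR_zero n (fun _ => 0)) by auto.
    apply sumR_cv. intros i Hi. now apply cv_abs_sub, H. }
  intros e He. destruct (Hs e He) as [N HN]. exists N. intros k Hk. specialize (HN k Hk).
  unfold Rdist in HN. rewrite Rminus_0_r in HN.
  pose proof (norm_le_sum_abs n (vsub (u k) v)). pose proof (Rle_abs (sumR n (fun i => Rabs (u k i - v i)))).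
  unfold dist, vsub in *. lra.
Qed.

Lemma vcv_coord n u v i : vcv n u v -> (i < n)%nat -> Un_cv (fun k => u k i) (v i).
Proof.
  intros H Hi e He. destruct (H e He) as [N HN]. exists N. intros k Hk.
  pose proof (HN k Hk). pose proof (coord_le_dist n (u k) v i Hi). unfold Rdist. lra.
Qed.

Definition strictly_increasing (phi : nat -> nat) := forall k, (phi k < phi (S k))%nat.

Lemma strictly_increasing_le phi : strictly_increasing phi ->
  forall k m, (k <= m)%nat -> (phi k <= phi m)%nat.
Proof. intros H k m Hkm. induction Hkm; auto. specialize (H m). lia. Qed.

Lemma strictly_increasing_ge_id phi : strictly_increasing phi -> forall k, (k <= phi k)%nat.
Proof. intros H k. induction k; [lia|]. specialize (H k). lia. Qed.

Lemma strictly_increasing_comp phi psi :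
  strictly_increasing phi -> strictly_increasing psi -> strictly_increasing (fun k => phi (psi k)).
Proof.
  intros H1 H2 k. pose proof (strictly_increasing_le phi H1 (S (psi k)) (psi (S k)) (H2 k)).
  specialize (H1 (psi k)). lia.
Qed.

Lemma cv_subseq u c phi : Un_cv u c -> strictly_increasing phi -> Un_cv (fun k => u (phi k)) c.
Proof.
  intros H Hp e He. destruct (H e He) as [N HN]. exists N. intros k Hk. apply HN.
  pose proof (strictly_increasing_ge_id phi Hp k). lia.
Qed.

(* Choose phi (S m) among the witnesses for Q (S m) beyond phi m. *)
Lemma extract_subseq (Q : nat -> nat -> Prop) :
  (forall m N, exists k, (N <= k)%nat /\ Q m k) ->
  exists phi, strictly_increasing phi /\ forall m, Q m (phi m).
Proof.
  intros H.
  set (c := fun m N => proj1_sig (constructive_indefinite_description _ (H m N))).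
  assert (Hc : forall m N, (N <= c m N)%nat /\ Q m (c m N))
    by (intros m N; unfold c; destruct constructive_indefinite_description; auto).
  exists (nat_rect (fun _ => nat) (c O O) (fun m p => c (S m) (S p))). split.
  - intros k. simpl. apply (Hc (S k)).
  - intros [|m]; apply Hc.
Qed.

Lemma bounded_real_subseq_cv (u : nat -> R) M : (forall k, Rabs (u k) <= M) ->
  exists c phi, strictly_increasing phi /\ Un_cv (fun k => u (phi k)) c.
Proof.
  intros HM.
  destruct (Bolzano_Weierstrass u (fun c => -M <= c <= M) (compact_P3 (-M) M)) as [c Hc].
  { intros k. specialize (HM k). pose proof (Rle_abs (u k)). pose proof (Rle_abs (- u k)). rewrite Rabs_Ropp in *. lra. }
  destruct (extract_subseq (fun m k => Rabs (u k - c) < / INR (S m))) as [phi [Hphi HQ]].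
  { intros m N. assert (He : 0 < / INR (S m)) by (apply Rinv_0_lt_compat, lt_0_INR; lia).
    destruct (Hc (disc c (mkposreal _ He)) N) as [p [Hp1 Hp2]]; eauto.
    exists (mkposreal _ He). intros x Hx. exact Hx. }
  exists c, phi. split; auto. intros e He. destruct (inv_INR_S_small e He) as [N HN].
  exists N. intros k Hk. unfold Rdist. specialize (HQ k). specialize (HN k Hk). lra.
Qed.

Lemma bounded_subseq_vcv n (u : nat -> vec) M :
  (forall k i, (i < n)%nat -> Rabs (u k i) <= M) ->
  exists v phi, strictly_increasing phi /\ vcv n (fun k => u (phi k)) v.
Proof.
  intros HM.
  enough (exists v phi, strictly_increasing phi /\
            forall i, (i < n)%nat -> Un_cv (fun k => u (phi k) i) (v i)) as (v & phi & ? & ?)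
    by (exists v, phi; auto using vcv_of_coords).
  induction n as [|n IH].
  - exists (fun _ => 0), (fun k => k). split; [intros k; lia|intros; lia].
  - destruct IH as (v & phi & Hphi & Hcv); [intros; apply HM; lia|].
    destruct (bounded_real_subseq_cv (fun k => u (phi k) n) M) as (c & psi & Hpsi & Hc);
      [intros; apply HM; lia|].
    exists (fun i => if Nat.eqb i n then c else v i), (fun k => phi (psi k)).
    split; [apply strictly_increasing_comp; auto|].
    intros i Hi. destruct (Nat.eqb_spec i n) as [->|Hin]; auto.
    apply (cv_subseq (fun k => u (phi k) i)); auto. apply Hcv. lia.
Qed.

Lemma cluster_of_subseq n u v phi :
  strictly_increasing phi -> vcv n (fun k => u (phi k)) v -> cluster n u v.
Proof.
  intros Hp Hv e He N. destruct (Hv e He) as [M HM]. exists (phi (max N M)). split.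
  - pose proof (strictly_increasing_ge_id phi Hp (max N M)). lia.
  - apply HM. lia.
Qed.

Lemma subseq_of_cluster n u v :
  cluster n u v -> exists phi, strictly_increasing phi /\ vcv n (fun k => u (phi k)) v.
Proof.
  intros Hc.
  destruct (extract_subseq (fun m k => dist n (u k) v < / INR (S m))) as [phi [Hp HQ]].
  { intros m N. apply Hc. apply Rinv_0_lt_compat, lt_0_INR. lia. }
  exists phi. split; auto. intros e He. destruct (inv_INR_S_small e He) as [N HN].
  exists N. intros k Hk. specialize (HQ k). specialize (HN k Hk). lra.
Qed.

Lemma box_bounded n lo hi :
  exists M, forall x i, inbox n lo hi x -> (i < n)%nat -> Rabs (x i) <= M.
Proof.
  exists (sumR n (fun i => Rabs (lo i) + Rabs (hi i))). intros x i Hx Hi.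
  assert (Hterm := sumR_term_le n (fun i => Rabs (lo i) + Rabs (hi i)) i).
  cbv beta in Hterm. destruct (Hx i Hi).
  pose proof (Rabs_pos (lo i)). pose proof (Rabs_pos (hi i)).
  assert (Rabs (x i) <= Rabs (lo i) + Rabs (hi i)).
  { unfold Rabs. destruct (Rcase_abs (x i)), (Rcase_abs (lo i)), (Rcase_abs (hi i)); lra. }
  enough (Rabs (lo i) + Rabs (hi i) <= sumR n (fun i => Rabs (lo i) + Rabs (hi i))) by lra.
  apply Hterm; auto. intros s _. pose proof (Rabs_pos (lo s)). pose proof (Rabs_pos (hi s)). lra.
Qed.

Lemma feas_limit n lo hi a beta (lo' hi' a' : nat -> vec) (b' : nat -> R) (w : nat -> vec) v :
  (forall i, (i < n)%nat -> Un_cv (fun k => lo' k i) (lo i) /\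
     Un_cv (fun k => hi' k i) (hi i) /\ Un_cv (fun k => a' k i) (a i)) ->
  Un_cv b' beta ->
  (forall k, feas n (lo' k) (hi' k) (a' k) (b' k) (w k)) ->
  vcv n w v -> feas n lo hi a beta v.
Proof.
  intros Hc Hb Hw Hv. split.
  - intros i Hi. destruct (Hc i Hi) as (Hlo & Hhi & _).
    pose proof (vcv_coord n w v i Hv Hi) as Hwi.
    split; [apply (cv_le_eventually _ _ _ _ O Hlo Hwi)|apply (cv_le_eventually _ _ _ _ O Hwi Hhi)];
      intros k _; apply (proj1 (Hw k) i Hi).
  - apply (UL_sequence (fun k => dot n (a' k) (w k))).
    + apply dot_cv; intros i Hi; [apply Hc|apply (vcv_coord n)]; auto.
    + intros e He. destruct (Hb e He) as [N HN]. exists N. intros k Hk.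
      rewrite (proj2 (Hw k)). auto.
Qed.

Lemma feas_closed n lo hi a beta (w : nat -> vec) v :
  (forall k, feas n lo hi a beta (w k)) -> vcv n w v -> feas n lo hi a beta v.
Proof.
  apply (feas_limit n lo hi a beta (fun _ => lo) (fun _ => hi) (fun _ => a) (fun _ => beta)).
  - intros; repeat split; apply cv_const.
  - apply cv_const.
Qed.

(* A minimising sequence for [dist z] has a convergent subsequence, whose limit stays in C. *)
Lemma nearest_point_exists n (C : vec -> Prop) z M :
  (exists x, C x) -> (forall x i, C x -> (i < n)%nat -> Rabs (x i) <= M) ->
  (forall w v, (forall k, C (w k)) -> vcv n w v -> C v) ->
  exists p, is_proj n C z p.
Proof.
  intros [x0 Hx0] HM Hcl.
  set (E := fun r => exists x, C x /\ r = - dist n z x).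
  destruct (completeness E) as [m' [Hub Hlub]].
  { exists 0. intros r [x [_ ->]]. pose proof (dist_nonneg n z x). lra. }
  { exists (- dist n z x0). exists x0. auto. }
  assert (Hlow : forall q, C q -> - m' <= dist n z q).
  { intros q Hq. assert (E (- dist n z q)) as HE by (exists q; auto). specialize (Hub _ HE). lra. }
  assert (Happ : forall k, exists x, C x /\ dist n z x < - m' + / INR (S k)).
  { intros k. apply NNPP. intros Hno.
    assert (Hk : 0 < / INR (S k)) by (apply Rinv_0_lt_compat, lt_0_INR; lia).
    enough (m' <= - (- m' + / INR (S k))) by lra.
    apply Hlub. intros r [x [Hx ->]]. apply Ropp_le_contravar, Rnot_lt_le.
    intros Hlt. apply Hno. eauto. }
  destruct (choice _ Happ) as [xs Hxs].
  destruct (bounded_subseq_vcv n xs M) as (v & phi & Hphi & Hcv).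
  { intros k i Hi. apply HM; auto. apply Hxs. }
  assert (Hv : C v) by (apply (Hcl (fun k => xs (phi k))); auto; intros; apply Hxs).
  exists v. split; auto. intros q Hq. specialize (Hlow q Hq).
  enough (dist n z v <= - m') by lra.
  apply Rnot_lt_le. intros Hlt. set (e := (dist n z v + m') / 2).
  destruct (Hcv e ltac:(unfold e; lra)) as [N1 H1].
  destruct (inv_INR_S_small e ltac:(unfold e; lra)) as [N2 H2].
  set (k := max N1 N2). specialize (H1 k ltac:(unfold k; lia)).
  specialize (H2 (phi k) ltac:(pose proof (strictly_increasing_ge_id phi Hphi k); unfold k in *; lia)).
  pose proof (proj2 (Hxs (phi k))). pose proof (dist_triangle n z (xs (phi k)) v).
  unfold e in *. lra.
Qed.

Lemma proj_onto_feas_exists n lo hi a beta z :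
  (exists x, feas n lo hi a beta x) -> exists p, is_proj n (feas n lo hi a beta) z p.
Proof.
  intros Hne. destruct (box_bounded n lo hi) as [M HM].
  apply (nearest_point_exists n _ z M Hne).
  - intros x i Hx. apply HM, Hx.
  - apply feas_closed.
Qed.

(** * Calculus along lines *)

Definition cont_at (n : nat) (F : vec -> R) (x : vec) : Prop :=
  forall e, 0 < e -> exists r, 0 < r /\ forall y, dist n y x < r -> Rabs (F y - F x) < e.

Lemma cont_at_seq n F x (u : nat -> vec) :
  cont_at n F x -> vcv n u x -> Un_cv (fun k => F (u k)) (F x).
Proof.
  intros Hc Hu e He. destruct (Hc e He) as [r [Hr H]]. destruct (Hu r Hr) as [N HN].
  exists N. intros k Hk. apply H. auto.
Qed.

Lemma loc_lipschitz_cont_at n f x : loc_lipschitz n f x -> cont_at n f x.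
Proof.
  intros [L [r [Hr H]]] e He. set (K := Rabs L + 1). pose proof (Rabs_pos L).
  exists (Rmin r (e / K)). split; [apply Rmin_pos; [|apply Rdiv_lt_0_compat]; unfold K; lra|].
  intros y Hy. pose proof (Rmin_l r (e / K)). pose proof (Rmin_r r (e / K)).
  specialize (H y x ltac:(lra)). rewrite dist_refl in H. specialize (H Hr).
  pose proof (dist_nonneg n y x). pose proof (Rle_abs L).
  assert (dist n y x * K < e).
  { apply Rmult_lt_reg_r with (/ K); [apply Rinv_0_lt_compat; unfold K; lra|].
    rewrite Rmult_assoc, Rinv_r by (unfold K; lra). lra. }
  unfold K in *. nra.
Qed.

Lemma frechet_cont_at n F x g : frechet n F x g -> cont_at n F x.
Proof.
  intros Hf e He. destruct (Hf 1 Rlt_0_1) as [r1 [Hr1 H1]].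
  set (K := norm n g + 2). pose proof (norm_nonneg n g).
  exists (Rmin r1 (e / K)). split; [apply Rmin_pos; [|apply Rdiv_lt_0_compat]; unfold K; lra|].
  intros y Hy. pose proof (Rmin_l r1 (e / K)). pose proof (Rmin_r r1 (e / K)).
  specialize (H1 (vsub y x)).
  replace (vadd x (vsub y x)) with y in H1
    by (apply functional_extensionality; intros; unfold vadd, vsub; ring).
  pose proof (norm_nonneg n (vsub y x)). unfold dist in Hy.
  specialize (H1 ltac:(lra)). pose proof (dot_le_norm_mul n g (vsub y x)).
  pose proof (Rabs_triang (F y - F x - dot n g (vsub y x)) (dot n g (vsub y x))) as Htri.
  replace (F y - F x - dot n g (vsub y x) + dot n g (vsub y x)) with (F y - F x) in Htri by ring.
  assert (norm n (vsub y x) * K < e).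
  { apply Rmult_lt_reg_r with (/ K); [apply Rinv_0_lt_compat; unfold K; lra|].
    rewrite Rmult_assoc, Rinv_r by (unfold K; lra). lra. }
  unfold K in *. nra.
Qed.

Lemma frechet_line_derivative n F G x d s :
  frechet n F (vadd x (vscal s d)) (G (vadd x (vscal s d))) ->
  derivable_pt_lim (fun t => F (vadd x (vscal t d))) s (dot n (G (vadd x (vscal s d))) d).
Proof.
  intros Hf e He. set (p := vadd x (vscal s d)).
  pose proof (norm_nonneg n d) as Hd. set (K := norm n d + 1).
  assert (HK : 0 < K) by (unfold K; lra). assert (HdK : norm n d < K) by (unfold K; lra).
  clearbody K.
  destruct (Hf (e / (2 * K))) as [r [Hr H]]; [apply Rdiv_lt_0_compat; lra|].
  exists (mkposreal (r / K) (Rdiv_lt_0_compat _ _ Hr HK)). simpl.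
  intros h Hh0 Hh. specialize (H (vscal h d)). rewrite norm_scal, dot_scal_r in H. fold p in H.
  replace (vadd p (vscal h d)) with (vadd x (vscal (s + h) d)) in H
    by (apply functional_extensionality; intros; unfold p, vadd, vscal; ring).
  assert (Hah : 0 < Rabs h) by (apply Rabs_pos_lt; auto).
  assert (HhK : Rabs h * K < r).
  { apply Rmult_lt_reg_r with (/ K); [apply Rinv_0_lt_compat; lra|].
    rewrite Rmult_assoc, Rinv_r by lra. lra. }
  specialize (H ltac:(nra)).
  replace ((F (vadd x (vscal (s + h) d)) - F p) / h - dot n (G p) d)
    with ((F (vadd x (vscal (s + h) d)) - F p - h * dot n (G p) d) / h) by (field; auto).
  unfold Rdiv. rewrite Rabs_mult, Rabs_inv.
  apply Rmult_lt_reg_r with (Rabs h); auto. rewrite Rmult_assoc, Rinv_l, Rmult_1_r by lra.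
  eapply Rle_lt_trans; [apply H|].
  assert (e / (2 * K) * norm n d < e).
  { apply Rmult_lt_reg_r with (2 * K); [lra|].
    replace (e / (2 * K) * norm n d * (2 * K)) with (e * norm n d) by (field; lra). nra. }
  nra.
Qed.

Lemma pow_in_unit theta m : 0 < theta < 1 -> 0 < theta ^ m <= 1.
Proof. intros Ht. induction m; simpl; [lra|]. nra. Qed.

Lemma armijo_backtracking_terminates n F x g d sigma theta gamma :
  frechet n F x g -> dot n g d < 0 -> 0 < sigma < 1 -> 0 < theta < 1 -> 0 < gamma ->
  exists m, F (vadd x (vscal (theta ^ m * gamma) d))
            <= F x + sigma * (theta ^ m * gamma) * dot n g d.
Proof.
  intros Hf Hgd Hs Ht Hg. set (K := norm n d + 1). pose proof (norm_nonneg n d) as Hd.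
  destruct (Hf ((1 - sigma) * - dot n g d / K)) as [r [Hr H]].
  { apply Rdiv_lt_0_compat; unfold K; nra. }
  destruct (pow_lt_1_zero theta ltac:(rewrite Rabs_right; lra) (r / (gamma * K))) as [M HM].
  { apply Rdiv_lt_0_compat; unfold K; nra. }
  specialize (HM M (le_n M)). rewrite Rabs_right in HM by (apply Rle_ge, pow_le; lra).
  exists M. pose proof (pow_in_unit theta M Ht). set (s := theta ^ M * gamma) in *.
  assert (Hs0 : 0 < s) by (unfold s; nra).
  assert (HsK : s * K < r).
  { unfold s. apply Rmult_lt_reg_r with (/ (gamma * K)); [apply Rinv_0_lt_compat; unfold K; nra|].
    replace (theta ^ M * gamma * K * / (gamma * K)) with (theta ^ M) by (field; unfold K; lra).
    lra. }
  specialize (H (vscal s d)). rewrite norm_scal, Rabs_right, dot_scal_r in H by lra.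
  specialize (H ltac:(unfold K in HsK; nra)).
  pose proof (Rle_abs (F (vadd x (vscal s d)) - F x - s * dot n g d)).
  assert ((1 - sigma) * - dot n g d / K * (s * norm n d) <= (1 - sigma) * - dot n g d * s).
  { replace ((1 - sigma) * - dot n g d / K * (s * norm n d))
      with ((1 - sigma) * - dot n g d * s * (norm n d / K)) by (field; unfold K; lra).
    assert (norm n d / K <= 1).
    { apply Rmult_le_reg_r with K; [unfold K; lra|].
      unfold Rdiv. rewrite Rmult_assoc, Rinv_l by (unfold K; lra). unfold K; lra. }
    assert (0 <= (1 - sigma) * - dot n g d * s) by (apply Rmult_le_pos; nra). nra. }
  nra.
Qed.

(** * One stage of the method *)

Lemma least_witness (P : nat -> Prop) :
  (exists m, P m) -> exists m, P m /\ forall m', (m' < m)%nat -> ~ P m'.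
Proof.
  intros Hex. destruct (Wf_nat.dec_inh_nat_subset_has_unique_least_element P
    (fun m => classic (P m)) Hex) as [m [[Hm Hleast] _]].
  exists m. split; auto. intros m' Hlt Hm'. specialize (Hleast m' Hm'). lia.
Qed.

Lemma dir_other al l i j s : s <> i -> s <> j -> dir al l i j s = 0.
Proof.
  intros. unfold dir. destruct (Nat.eqb_spec s i); [lia|]. destruct (Nat.eqb_spec s j); [lia|]. auto.
Qed.

Lemma dir_i al l i j : dir al l i j i = - / al l i.
Proof. unfold dir. now rewrite Nat.eqb_refl. Qed.

Lemma dir_j al l i j : i <> j -> dir al l i j j = / al l j.
Proof. intros. unfold dir. destruct (Nat.eqb_spec j i); [lia|]. now rewrite Nat.eqb_refl. Qed.

Lemma dot_dir n al l i j v : (i < n)%nat -> (j < n)%nat -> i <> j ->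
  dot n v (dir al l i j) = v j / al l j - v i / al l i.
Proof.
  intros Hi Hj Hij. unfold dot.
  rewrite (sumR_two n _ i j), dir_i, dir_j by (auto; intros; rewrite dir_other by auto; ring).
  unfold Rdiv. ring.
Qed.

Lemma norm_dir_le n al l i j :
  (forall s, (s < n)%nat -> 0 < al l s) -> (i < n)%nat -> (j < n)%nat -> i <> j ->
  norm n (dir al l i j) <= 2 * sumR n (fun s => / al l s).
Proof.
  intros Hal Hi Hj Hij. eapply Rle_trans; [apply norm_le_sum_abs|].
  rewrite (sumR_two n _ i j), dir_i, dir_j by (auto; intros; rewrite dir_other by auto; apply Rabs_R0).
  assert (Hp : forall s, (s < n)%nat -> 0 <= / al l s)
    by (intros; left; apply Rinv_0_lt_compat; auto).
  pose proof (sumR_term_le n (fun s => / al l s) i Hp Hi).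
  pose proof (sumR_term_le n (fun s => / al l s) j Hp Hj).
  rewrite Rabs_Ropp, !Rabs_right by (apply Rle_ge; auto). lra.
Qed.

Section Stage.

Variables (n : nat) (lol hil al : nat -> vec) (betal : nat -> R).
Variables (fl : nat -> vec -> R) (gf : nat -> vec -> vec).
Variables (sigma theta : R) (dlt eps : nat -> R) (L : nat).

Hypothesis Hal : forall i, (i < n)%nat -> 0 < al L i /\ lol L i < hil L i.
Hypothesis HC1 : C1_near_box n (fl L) (gf L) (lol L) (hil L).
Hypothesis Hsigma : 0 < sigma < 1.
Hypothesis Htheta : 0 < theta < 1.
Hypothesis Hdlt : 0 < dlt L.
Hypothesis Heps : 0 < eps L.

Local Notation DL := (feas n (lol L) (hil L) (al L) (betal L)).
Local Notation elig := (eligible n lol hil al gf dlt eps L).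
Local Notation step := (bcv_step n lol hil al fl gf sigma theta dlt eps L).
Local Notation gamma := (gam lol hil al L).

Lemma al_pos i : (i < n)%nat -> 0 < al L i.
Proof. apply Hal. Qed.

Lemma eligible_distinct x i j : elig x i j -> i <> j.
Proof. intros (_ & _ & H) ->. lra. Qed.

Lemma eligible_gam_ge_eps x i j : elig x i j -> eps L <= gamma x i j.
Proof.
  intros ([Hi H1] & [Hj H2] & _). pose proof (al_pos i Hi). pose proof (al_pos j Hj).
  unfold gam. apply Rmin_glb.
  - apply Rmult_le_reg_r with (/ al L i); [apply Rinv_0_lt_compat; auto|].
    replace (al L i * (x i - lol L i) * / al L i) with (x i - lol L i) by (field; lra).
    unfold Rdiv in H1. lra.
  - apply Rmult_le_reg_r with (/ al L j); [apply Rinv_0_lt_compat; auto|].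
    replace (al L j * (hil L j - x j) * / al L j) with (hil L j - x j) by (field; lra).
    unfold Rdiv in H2. lra.
Qed.

Lemma eligible_descent x i j : elig x i j -> dot n (gf L x) (dir al L i j) <= - dlt L.
Proof.
  intros Hel. pose proof (eligible_distinct x i j Hel).
  destruct Hel as ([Hi _] & [Hj _] & Hh). rewrite dot_dir by auto. unfold hq in Hh. lra.
Qed.

(* Moving along [dir] keeps <al L, x> fixed; [gam] is the largest step staying in the box. *)
Lemma feas_along_dir x i j t : DL x -> elig x i j -> 0 <= t <= gamma x i j ->
  DL (vadd x (vscal t (dir al L i j))).
Proof.
  intros [Hbox Hdot] Hel Ht. pose proof (eligible_distinct x i j Hel) as Hij.
  destruct Hel as ([Hi _] & [Hj _] & _).
  pose proof (al_pos i Hi). pose proof (al_pos j Hj).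
  pose proof (Rmin_l (al L i * (x i - lol L i)) (al L j * (hil L j - x j))).
  pose proof (Rmin_r (al L i * (x i - lol L i)) (al L j * (hil L j - x j))).
  unfold gam in Ht. split.
  - intros s Hs. unfold vadd, vscal. destruct (Hbox s Hs).
    destruct (Nat.eq_dec s i) as [->|Hsi]; [|destruct (Nat.eq_dec s j) as [->|Hsj]].
    + rewrite dir_i.
      assert (t * / al L i <= x i - lol L i).
      { apply Rmult_le_reg_r with (al L i); auto.
        rewrite Rmult_assoc, Rinv_l by lra. lra. }
      assert (0 <= t * / al L i) by (apply Rmult_le_pos; [lra|left; apply Rinv_0_lt_compat; auto]).
      lra.
    + rewrite dir_j by auto.
      assert (t * / al L j <= hil L j - x j).
      { apply Rmult_le_reg_r with (al L j); auto.
        rewrite Rmult_assoc, Rinv_l by lra. lra. }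
      assert (0 <= t * / al L j) by (apply Rmult_le_pos; [lra|left; apply Rinv_0_lt_compat; auto]).
      lra.
    + rewrite dir_other by auto. lra.
  - rewrite dot_vadd_scal_r, dot_dir, Hdot by auto. field_simplify; lra.
Qed.

Lemma step_length_pos x i j m : elig x i j -> 0 < theta ^ m * gamma x i j.
Proof.
  intros Hel. pose proof (eligible_gam_ge_eps x i j Hel). pose proof (pow_in_unit theta m Htheta).
  nra.
Qed.

Lemma step_feas x x' : DL x -> step x x' -> DL x'.
Proof.
  intros Hx (i & j & Hel & m & _ & _ & ->). apply feas_along_dir; auto.
  pose proof (step_length_pos x i j m Hel). pose proof (pow_in_unit theta m Htheta).
  pose proof (eligible_gam_ge_eps x i j Hel). split; nra.
Qed.

Lemma reachable_feas x x' : DL x -> clos_refl_trans vec step x x' -> DL x'.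
Proof. intros Hx Hrt. induction Hrt; eauto using step_feas. Qed.

Lemma armijo_decrease x i j lam : elig x i j -> 0 <= lam ->
  armijo n al fl gf sigma L x i j lam ->
  fl L (vadd x (vscal lam (dir al L i j))) <= fl L x - sigma * dlt L * lam.
Proof.
  unfold armijo. intros Hel Hlam Harm. pose proof (eligible_descent x i j Hel).
  assert (0 <= sigma * lam) by (apply Rmult_le_pos; lra). nra.
Qed.

Lemma step_descent x x' : step x x' -> fl L x' <= fl L x.
Proof.
  intros (i & j & Hel & m & Harm & _ & ->). pose proof (step_length_pos x i j m Hel).
  pose proof (armijo_decrease x i j (theta ^ m * gamma x i j) Hel ltac:(lra) Harm).
  assert (0 <= sigma * dlt L * (theta ^ m * gamma x i j)) by (apply Rmult_le_pos; nra). lra.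
Qed.

Lemma stop_or_step x : DL x -> bcv_stop n lol hil al gf dlt eps L x \/ exists x', step x x'.
Proof.
  intros Hx. destruct (classic (exists i j, elig x i j)) as [(i & j & Hel)|Hno]; [right|now left].
  destruct HC1 as [r [Hr HC]]. destruct (HC x x (proj1 Hx)) as [Hfr _]; [rewrite dist_refl; auto|].
  pose proof (eligible_gam_ge_eps x i j Hel). pose proof (eligible_descent x i j Hel).
  destruct (least_witness (fun m => armijo n al fl gf sigma L x i j (theta ^ m * gamma x i j)))
    as (m & Hm & Hmin).
  { apply (armijo_backtracking_terminates n (fl L) x (gf L x)); auto; lra. }
  eexists. exists i, j. split; auto. exists m. eauto.
Qed.

(* The mean value theorem on the rejected trial step. *)
Lemma rejected_trial_gradient_gap x i j t : DL x -> elig x i j -> 0 < t <= gamma x i j ->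
  ~ armijo n al fl gf sigma L x i j t ->
  exists c, 0 < c < t /\ (1 - sigma) * dlt L <
    dot n (vsub (gf L (vadd x (vscal c (dir al L i j)))) (gf L x)) (dir al L i j).
Proof.
  intros Hx Hel Ht Hrej. set (d := dir al L i j). destruct HC1 as [r [Hr HC]].
  assert (Hder : forall c, 0 <= c <= t -> derivable_pt_lim (fun c => fl L (vadd x (vscal c d))) c
                                            (dot n (gf L (vadd x (vscal c d))) d)).
  { intros c Hc. apply frechet_line_derivative.
    destruct (feas_along_dir x i j c Hx Hel ltac:(lra)) as [Hbox _].
    apply (HC _ _ Hbox). rewrite dist_refl. auto. }
  destruct (MVT_cor2 _ _ 0 t (proj1 Ht) Hder) as (c & Hmvt & Hc).
  exists c. split; auto.
  replace (vadd x (vscal 0 d)) with x in Hmvt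
    by (apply functional_extensionality; intros; unfold vadd, vscal; ring).
  unfold armijo in Hrej. fold d in Hrej. apply Rnot_le_lt in Hrej.
  pose proof (eligible_descent x i j Hel) as Hgd. fold d in Hgd.
  assert (sigma * dot n (gf L x) d < dot n (gf L (vadd x (vscal c d))) d).
  { apply Rmult_lt_reg_r with t; lra. }
  rewrite dot_vsub_l. nra.
Qed.

(* Near a feasible point, gradient continuity forbids arbitrarily short rejected trials. *)
Lemma rejected_trial_length_bound xb : DL xb ->
  exists r t0, 0 < r /\ 0 < t0 /\ forall x i j t, DL x -> dist n x xb < r -> elig x i j ->
    0 < t <= gamma x i j -> ~ armijo n al fl gf sigma L x i j t -> t0 <= t.
Proof.
  intros Hxb. destruct HC1 as [r0 [Hr0 HC]].
  destruct (HC xb xb (proj1 Hxb)) as [_ Hcont]; [rewrite dist_refl; auto|].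
  set (K := sumR n (fun s => / al L s)).
  assert (HK : 0 <= K)
    by (apply sumR_nonneg; intros; left; apply Rinv_0_lt_compat, al_pos; auto).
  set (e0 := (1 - sigma) * dlt L / (4 * K + 1)).
  assert (He0 : e0 * (4 * K + 1) = (1 - sigma) * dlt L) by (unfold e0; field; lra).
  assert (He0pos : 0 < e0) by (unfold e0; apply Rdiv_lt_0_compat; nra).
  destruct (Hcont e0 He0pos) as [r1 [Hr1 Hr1']].
  exists (r1 / 2), (r1 / (4 * K + 1)). split; [lra|]. split; [apply Rdiv_lt_0_compat; lra|].
  intros x i j t Hx Hxx Hel Ht Hrej. apply Rnot_lt_le. intros Hshort.
  destruct (rejected_trial_gradient_gap x i j t Hx Hel Ht Hrej) as (c & Hc & Hgap).
  pose proof (eligible_distinct x i j Hel) as Hij. destruct Hel as ([Hi _] & [Hj _] & _).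
  set (d := dir al L i j) in *. set (y := vadd x (vscal c d)) in *.
  pose proof (norm_dir_le n al L i j al_pos Hi Hj Hij) as Hnd. fold d K in Hnd.
  assert (Hyx : dist n y x <= t * (2 * K)).
  { unfold y. rewrite dist_line, Rabs_right by lra. pose proof (norm_nonneg n d). nra. }
  assert (Ht2K : t * (2 * K) < r1 / 2).
  { assert (t * (4 * K + 1) < r1).
    { apply Rmult_lt_reg_r with (/ (4 * K + 1)); [apply Rinv_0_lt_compat; lra|].
      rewrite Rmult_assoc, Rinv_r by lra. unfold Rdiv in Hshort. lra. }
    nra. }
  pose proof (dist_triangle n y x xb).
  pose proof (Hr1' y ltac:(lra)). pose proof (Hr1' x ltac:(lra)).
  assert (Hgd : norm n (vsub (gf L y) (gf L x)) < 2 * e0).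
  { change (dist n (gf L y) (gf L x) < 2 * e0).
    pose proof (dist_triangle n (gf L y) (gf L xb) (gf L x)).
    rewrite (dist_sym n (gf L xb)) in *. lra. }
  pose proof (dot_le_norm_mul n (vsub (gf L y) (gf L x)) d).
  pose proof (Rle_abs (dot n (vsub (gf L y) (gf L x)) d)).
  pose proof (norm_nonneg n (vsub (gf L y) (gf L x))). pose proof (norm_nonneg n d).
  assert (norm n (vsub (gf L y) (gf L x)) * norm n d <= 2 * e0 * (2 * K))
    by (apply Rmult_le_compat; lra).
  nra.
Qed.

Lemma step_decrease_near xb : DL xb -> exists r c, 0 < r /\ 0 < c /\
  forall x x', DL x -> dist n x xb < r -> step x x' -> fl L x' <= fl L x - c.
Proof.
  intros Hxb. destruct (rejected_trial_length_bound xb Hxb) as (r & t0 & Hr & Ht0 & Hlen).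
  set (lam0 := Rmin (theta * eps L) (theta * t0)).
  assert (Hlam0 : 0 < lam0) by (apply Rmin_pos; nra).
  exists r, (sigma * dlt L * lam0). split; [auto|]. split; [apply Rmult_lt_0_compat; nra|].
  intros x x' Hx Hxx (i & j & Hel & m & Harm & Hmin & ->).
  pose proof (eligible_gam_ge_eps x i j Hel).
  assert (Hlam : lam0 <= theta ^ m * gamma x i j).
  { destruct m as [|m].
    - pose proof (Rmin_l (theta * eps L) (theta * t0)) as Hl. fold lam0 in Hl. simpl. nra.
    - pose proof (pow_in_unit theta m Htheta).
      pose proof (Hlen x i j (theta ^ m * gamma x i j) Hx Hxx Hel ltac:(split; nra)
                    (Hmin m (Nat.lt_succ_diag_r m))).
      pose proof (Rmin_r (theta * eps L) (theta * t0)) as Hl. fold lam0 in Hl. simpl. nra. }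
  pose proof (armijo_decrease x i j (theta ^ m * gamma x i j) Hel ltac:(lra) Harm).
  assert (sigma * dlt L * lam0 <= sigma * dlt L * (theta ^ m * gamma x i j))
    by (apply Rmult_le_compat_l; nra).
  lra.
Qed.

(* Along an infinite chain the values decrease; near a cluster point each step decreases
   them by a fixed amount, while along the convergent subsequence they form a Cauchy sequence. *)
Lemma no_infinite_chain x0 : DL x0 ->
  ~ exists xs : nat -> vec, xs O = x0 /\ forall k, step (xs k) (xs (S k)).
Proof.
  intros Hx0 (xs & H0 & Hst).
  assert (Hfe : forall k, DL (xs k))
    by (induction k; [now rewrite H0|eauto using step_feas]).
  assert (Hmono : forall k m, (k <= m)%nat -> fl L (xs m) <= fl L (xs k)).
  { intros k m Hkm. induction Hkm; [lra|]. pose proof (step_descent _ _ (Hst m)). lra. }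
  destruct (box_bounded n (lol L) (hil L)) as [M HM].
  destruct (bounded_subseq_vcv n xs M) as (xb & phi & Hphi & Hcv).
  { intros k i Hi. apply HM; auto. apply Hfe. }
  assert (Hxb : DL xb) by (apply (feas_closed n _ _ _ _ (fun k => xs (phi k))); auto).
  destruct (step_decrease_near xb Hxb) as (r & c & Hr & Hc & Hdec).
  destruct HC1 as [r0 [Hr0 HC]].
  destruct (HC xb xb (proj1 Hxb)) as [Hfr _]; [rewrite dist_refl; auto|].
  assert (HF : Un_cv (fun s => fl L (xs (phi s))) (fl L xb))
    by (apply (cont_at_seq n); auto; eapply frechet_cont_at; eauto).
  destruct (HF (c / 2)) as [N1 HN1]; [lra|]. destruct (Hcv r Hr) as [N2 HN2].
  set (s := max N1 N2).
  pose proof (HN1 s ltac:(lia)) as Hs. pose proof (HN1 (S s) ltac:(lia)) as HSs.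
  pose proof (Hdec _ _ (Hfe (phi s)) (HN2 s ltac:(lia)) (Hst (phi s))).
  pose proof (Hmono (S (phi s)) (phi (S s)) (Hphi s)).
  unfold Rdist in *. apply Rabs_def2 in Hs. apply Rabs_def2 in HSs. lra.
Qed.

Lemma stage_well_defined z : (exists x, DL x) ->
  (exists x0, is_proj n DL z x0) /\
  forall x0, is_proj n DL z x0 ->
    (~ exists xs : nat -> vec, xs O = x0 /\ forall k, step (xs k) (xs (S k))) /\
    (forall x, clos_refl_trans vec step x0 x ->
       bcv_stop n lol hil al gf dlt eps L x \/ exists x', step x x').
Proof.
  intros Hne. split; [now apply proj_onto_feas_exists|].
  intros x0 [Hx0 _]. split; [now apply no_infinite_chain|].
  intros x Hrt. apply stop_or_step. eapply reachable_feas; eauto.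
Qed.

End Stage.

(** * Approximating a point of D by points of the D_l *)

Definition clamp (lo hi x : vec) : vec := fun i => Rmax (lo i) (Rmin (hi i) (x i)).

Lemma clamp_inbox n lo hi x : (forall i, (i < n)%nat -> lo i <= hi i) ->
  inbox n lo hi (clamp lo hi x).
Proof.
  intros H i Hi. specialize (H i Hi). unfold clamp, Rmax, Rmin.
  destruct (Rle_dec (hi i) (x i)), (Rle_dec (lo i) _); lra.
Qed.

Lemma clamp_close lo hi lo' hi' x i : lo i <= x i <= hi i ->
  Rabs (clamp lo' hi' x i - x i) <= Rabs (lo' i - lo i) + Rabs (hi' i - hi i).
Proof.
  intros H. unfold clamp, Rmax, Rmin.
  destruct (Rle_dec (hi' i) (x i)), (Rle_dec (lo' i) _); unfold Rabs; repeat destruct Rcase_abs; lra.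
Qed.

Lemma clamp_cv lo hi (lol hil : nat -> vec) x i : lo i <= x i <= hi i ->
  Un_cv (fun l => lol l i) (lo i) -> Un_cv (fun l => hil l i) (hi i) ->
  Un_cv (fun l => clamp (lol l) (hil l) x i) (x i).
Proof.
  intros Hx Hlo Hhi.
  apply cv_of_dominated with (v := fun l => Rabs (lol l i - lo i) + Rabs (hil l i - hi i)).
  - intros l. now apply clamp_close.
  - replace 0 with (0 + 0) by ring. apply CV_plus; now apply cv_abs_sub.
Qed.

Lemma term_le_dot_diff n a u w i :
  (forall s, (s < n)%nat -> 0 <= a s * (u s - w s)) -> (i < n)%nat ->
  Rabs (a i * (u i - w i)) <= Rabs (dot n a u - dot n a w).
Proof.
  intros H Hi. unfold dot. rewrite <- sumR_minus.
  rewrite (sumR_ext n _ (fun s => a s * (u s - w s))) by (intros; ring).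
  rewrite !Rabs_right by (apply Rle_ge; auto using sumR_nonneg).
  apply (sumR_term_le n (fun s => a s * (u s - w s))); auto.
Qed.

(* Walk from c towards the corner v by the fraction t of the way that restores <a, .> = b. *)
Lemma toward_corner_spec n lo hi a b c v :
  (forall i, (i < n)%nat -> 0 < a i) -> inbox n lo hi c -> inbox n lo hi v ->
  (dot n a v <= b <= dot n a c \/ dot n a c <= b <= dot n a v) ->
  (forall i, (i < n)%nat -> Rabs (a i * (c i - v i)) <= Rabs (dot n a c - dot n a v)) ->
  let t := (dot n a c - b) / (dot n a c - dot n a v) in
  feas n lo hi a b (vadd c (vscal t (vsub v c))) /\
  forall i, (i < n)%nat -> Rabs (t * (v i - c i)) <= Rabs (dot n a c - b) / a i.
Proof.
  intros Ha Hc Hv Hb Hterm t.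
  assert (Hbound : forall i, (i < n)%nat -> 0 <= Rabs (dot n a c - b) / a i)
    by (intros i Hi; pose proof (Ha i Hi); apply Rmult_le_pos;
        [apply Rabs_pos|left; apply Rinv_0_lt_compat; auto]).
  destruct (Req_dec (dot n a c) (dot n a v)) as [Heq|Hne].
  { assert (Ht : t = 0) by (unfold t; rewrite Heq, Rminus_diag; unfold Rdiv; rewrite Rinv_0; ring).
    rewrite Ht. split; [split|].
    - intros i Hi. unfold vadd, vscal. rewrite Rmult_0_l, Rplus_0_r. auto.
    - rewrite dot_vadd_scal_r. lra.
    - intros i Hi. rewrite Rmult_0_l, Rabs_R0. auto. }
  assert (HtD : t * (dot n a c - dot n a v) = dot n a c - b) by (unfold t; field; lra).
  assert (Hunit : 0 <= t <= 1)
    by (destruct (Rlt_dec (dot n a v) (dot n a c)); destruct Hb; split; nra).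
  split; [split|].
  - intros i Hi. unfold vadd, vscal, vsub. destruct (Hc i Hi), (Hv i Hi). nra.
  - rewrite dot_vadd_scal_r, dot_vsub_r. lra.
  - intros i Hi. pose proof (Ha i Hi). specialize (Hterm i Hi).
    rewrite Rabs_mult, (Rabs_right (a i)), Rabs_minus_sym in Hterm by lra.
    apply Rmult_le_reg_r with (a i); auto.
    unfold Rdiv. rewrite Rmult_assoc, Rinv_l, Rmult_1_r, <- HtD, !Rabs_mult by lra.
    pose proof (Rabs_pos t). nra.
Qed.

Definition hyperplane_repair n (lo hi a : vec) (b : R) (c : vec) : vec :=
  let v := if Rle_dec (dot n a c) b then hi else lo in
  vadd c (vscal ((dot n a c - b) / (dot n a c - dot n a v)) (vsub v c)).

Lemma hyperplane_repair_spec n lo hi a b c :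
  (forall i, (i < n)%nat -> 0 < a i /\ lo i <= hi i) -> inbox n lo hi c ->
  dot n a lo <= b <= dot n a hi ->
  feas n lo hi a b (hyperplane_repair n lo hi a b c) /\
  forall i, (i < n)%nat ->
    Rabs (hyperplane_repair n lo hi a b c i - c i) <= Rabs (dot n a c - b) / a i.
Proof.
  intros Hab Hc Hb.
  assert (Ha : forall i, (i < n)%nat -> 0 < a i) by apply Hab.
  assert (Hlo : inbox n lo hi lo) by (intros i Hi; destruct (Hab i Hi); lra).
  assert (Hhi : inbox n lo hi hi) by (intros i Hi; destruct (Hab i Hi); lra).
  assert (Hsub : forall v t i, vadd c (vscal t (vsub v c)) i - c i = t * (v i - c i))
    by (intros; unfold vadd, vscal, vsub; ring).
  unfold hyperplane_repair.
  destruct (Rle_dec (dot n a c) b) as [Hle|Hgt];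
    [destruct (toward_corner_spec n lo hi a b c hi) as [Hf Hclose]
    |destruct (toward_corner_spec n lo hi a b c lo) as [Hf Hclose]]; auto; try lra;
    try (split; [exact Hf|intros i Hi; rewrite Hsub; auto]);
    intros i Hi; [rewrite <- Rabs_Ropp, Ropp_mult_distr_r, Ropp_minus_distr,
                    (Rabs_minus_sym (dot n a c))|];
    apply term_le_dot_diff; auto;
    intros s Hs; destruct (Hc s Hs); pose proof (Ha s Hs); nra.
Qed.

Lemma feas_recovery_sequence n lo hi a beta (lol hil al : nat -> vec) betal x :
  (forall l i, (i < n)%nat -> 0 < al l i /\ lol l i < hil l i) ->
  (forall l, exists w, feas n (lol l) (hil l) (al l) (betal l) w) ->
  (forall i, (i < n)%nat -> 0 < a i) ->
  (forall i, (i < n)%nat -> Un_cv (fun l => lol l i) (lo i) /\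
     Un_cv (fun l => hil l i) (hi i) /\ Un_cv (fun l => al l i) (a i)) ->
  Un_cv betal beta -> feas n lo hi a beta x ->
  exists w : nat -> vec, (forall l, feas n (lol l) (hil l) (al l) (betal l) (w l)) /\ vcv n w x.
Proof.
  intros Hal Hne Ha Hc Hb [Hxb Hxd].
  set (c := fun l => clamp (lol l) (hil l) x).
  set (w := fun l => hyperplane_repair n (lol l) (hil l) (al l) (betal l) (c l)).
  assert (Hspec : forall l, feas n (lol l) (hil l) (al l) (betal l) (w l) /\
            forall i, (i < n)%nat -> Rabs (w l i - c l i) <= Rabs (dot n (al l) (c l) - betal l) / al l i).
  { intros l. destruct (Hne l) as [v [Hvb Hvd]]. apply hyperplane_repair_spec.
    - intros i Hi. destruct (Hal l i Hi). split; lra.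
    - apply clamp_inbox. intros i Hi. destruct (Hal l i Hi). lra.
    - rewrite <- Hvd. split; apply dot_le_pos_l; intros i Hi; split; apply Hal || apply Hvb; auto. }
  assert (Hclamp : forall i, (i < n)%nat -> Un_cv (fun l => c l i) (x i))
    by (intros i Hi; destruct (Hc i Hi) as (Hlo & Hhi & _); apply (clamp_cv lo hi); auto; apply Hxb; auto).
  assert (Hres : Un_cv (fun l => Rabs (dot n (al l) (c l) - betal l)) 0).
  { rewrite <- Rabs_R0, <- (Rminus_diag beta), <- Hxd at 1.
    apply cv_cvabs, CV_minus; auto. apply dot_cv; auto. intros i Hi; apply Hc; auto. }
  exists w. split; [apply Hspec|]. apply vcv_of_coords. intros i Hi.
  apply cv_of_dominated
    with (v := fun l => Rabs (dot n (al l) (c l) - betal l) / al l i + Rabs (c l i - x i)).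
  - intros l. replace (w l i - x i) with ((w l i - c l i) + (c l i - x i)) by ring.
    eapply Rle_trans; [apply Rabs_triang|]. apply Rplus_le_compat_r, Hspec; auto.
  - destruct (Hc i Hi) as (_ & _ & Hai). pose proof (Ha i Hi).
    replace 0 with (0 * / a i + 0) by ring.
    apply CV_plus; [apply CV_mult, cv_inv; auto; lra|apply cv_abs_sub, Hclamp; auto].
Qed.

(** * Stationarity on the box-constrained hyperplane *)

Lemma exists_max_on n (h : nat -> R) (P : nat -> Prop) :
  (forall i, (i < n)%nat -> ~ P i) \/
  exists i0, (i0 < n)%nat /\ P i0 /\ forall i, (i < n)%nat -> P i -> h i <= h i0.
Proof.
  induction n as [|n IH]; [left; intros; lia|].
  destruct (classic (P n)) as [Hn|Hn].
  - destruct IH as [Hno|(i0 & Hi0 & HP & Hmax)]; right.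
    + exists n. repeat split; auto. intros i Hi HPi.
      destruct (Nat.eq_dec i n) as [->|]; [lra|]. exfalso. apply (Hno i); auto; lia.
    + destruct (Rle_dec (h i0) (h n)).
      * exists n. repeat split; auto. intros i Hi HPi.
        destruct (Nat.eq_dec i n) as [->|]; [lra|]. specialize (Hmax i ltac:(lia) HPi). lra.
      * exists i0. repeat split; auto. intros i Hi HPi.
        destruct (Nat.eq_dec i n) as [->|]; [lra|]. apply Hmax; auto; lia.
  - destruct IH as [Hno|(i0 & Hi0 & HP & Hmax)]; [left|right].
    + intros i Hi. destruct (Nat.eq_dec i n) as [->|]; auto. apply Hno. lia.
    + exists i0. repeat split; auto. intros i Hi HPi.
      destruct (Nat.eq_dec i n) as [->|]; [contradiction|]. apply Hmax; auto; lia.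
Qed.

Lemma separating_value n (h : nat -> R) (P Q : nat -> Prop) :
  (forall i j, (i < n)%nat -> (j < n)%nat -> P i -> Q j -> h i <= h j) ->
  exists mu, (forall i, (i < n)%nat -> P i -> h i <= mu) /\
             (forall j, (j < n)%nat -> Q j -> mu <= h j).
Proof.
  intros H. destruct (exists_max_on n h P) as [HnoP|(i0 & Hi0 & HP & Hmax)].
  - destruct (exists_max_on n (fun j => - h j) Q) as [HnoQ|(j0 & Hj0 & HQ & Hmin)].
    + exists 0. split; intros i Hi Hi'; exfalso; [apply (HnoP i)|apply (HnoQ i)]; auto.
    + exists (h j0). split; [intros i Hi Hi'; exfalso; apply (HnoP i); auto|].
      intros j Hj HQj. specialize (Hmin j Hj HQj). lra.
  - exists (h i0). split; auto.
Qed.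

(* With mu between the ratios g_i/a_i, the sum <g, x - zb> splits into
   mu <a, x - zb> = 0 plus terms a_i (g_i/a_i - mu)(x_i - zb_i) >= 0. *)
Lemma kkt_implies_vi n lo hi a beta g zb :
  (forall i, (i < n)%nat -> 0 < a i) -> feas n lo hi a beta zb ->
  (forall i j, (i < n)%nat -> (j < n)%nat -> lo i < zb i -> zb j < hi j -> g i / a i <= g j / a j) ->
  forall x, feas n lo hi a beta x -> 0 <= dot n g (vsub x zb).
Proof.
  intros Ha [Hzb Hzd] HK x [Hxb Hxd].
  destruct (separating_value n (fun i => g i / a i) (fun i => lo i < zb i) (fun j => zb j < hi j) HK)
    as (mu & Hup & Hdown).
  assert (Hsplit : dot n g (vsub x zb) =
    sumR n (fun i => a i * (g i / a i - mu) * (x i - zb i)) + mu * (dot n a x - dot n a zb)).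
  { unfold dot, vsub. rewrite <- sumR_minus, <- sumR_scal, <- sumR_plus. apply sumR_ext.
    intros i Hi. pose proof (Ha i Hi). field. lra. }
  rewrite Hsplit, Hxd, Hzd, Rminus_diag, Rmult_0_r, Rplus_0_r.
  apply sumR_nonneg. intros i Hi. pose proof (Ha i Hi). destruct (Hzb i Hi), (Hxb i Hi).
  destruct (Rtotal_order (g i / a i) mu) as [Hlt|[Heq|Hgt]].
  - assert (zb i = hi i) by (destruct (Rlt_dec (zb i) (hi i)) as [Hl|]; [specialize (Hdown i Hi Hl)|]; lra).
    assert (a i * (g i / a i - mu) <= 0) by nra. nra.
  - rewrite Heq. nra.
  - assert (zb i = lo i) by (destruct (Rlt_dec (lo i) (zb i)) as [Hl|]; [specialize (Hup i Hi Hl)|]; lra).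
    assert (0 <= a i * (g i / a i - mu)) by nra. nra.
Qed.

(** * Convergence of the outer iterates *)

Lemma coordwise_bounded n (w : nat -> vec) :
  (forall i, (i < n)%nat -> exists B, forall l, Rabs (w l i) <= B) ->
  exists B, forall l i, (i < n)%nat -> Rabs (w l i) <= B.
Proof.
  induction n as [|n IH]; intros H; [exists 0; intros; lia|].
  destruct IH as [B1 H1]; [intros; apply H; lia|]. destruct (H n ltac:(lia)) as [B2 H2].
  exists (Rmax B1 B2). intros l i Hi. destruct (Nat.eq_dec i n) as [->|Hin].
  - eapply Rle_trans; [apply H2|apply Rmax_r].
  - eapply Rle_trans; [apply H1; lia|apply Rmax_l].
Qed.

Lemma splice_subseq n (P : nat -> vec -> Prop) (z w : nat -> vec) phi zb :
  strictly_increasing phi -> (forall l, P l (z l)) -> (forall l, P l (w l)) ->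
  vcv n w zb -> vcv n (fun s => z (phi s)) zb ->
  exists y, (forall l, P l (y l)) /\ (forall s, y (phi s) = z (phi s)) /\ vcv n y zb.
Proof.
  intros Hphi Hz Hw Hwc Hzc.
  set (y := fun l => if excluded_middle_informative (exists s, phi s = l) then z l else w l).
  exists y. split; [|split].
  - intros l. unfold y. destruct excluded_middle_informative; auto.
  - intros s. unfold y. destruct excluded_middle_informative as [_|Hn]; auto.
    exfalso. apply Hn. eauto.
  - intros e He. destruct (Hwc e He) as [N1 HN1]. destruct (Hzc e He) as [N2 HN2].
    exists (max N1 (phi N2)). intros l Hl. unfold y.
    destruct excluded_middle_informative as [[s <-]|_]; [|apply HN1; lia].
    apply HN2. destruct (Compare_dec.le_lt_dec N2 s) as [|Hlt]; auto.
    pose proof (strictly_increasing_le phi Hphi (S s) N2 Hlt). specialize (Hphi s). lia.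
Qed.

Lemma cv_of_cluster_values n (z : nat -> vec) M (F : vec -> R) c :
  (forall k i, (i < n)%nat -> Rabs (z k i) <= M) ->
  (forall v, cluster n z v -> F v = c /\ cont_at n F v) ->
  Un_cv (fun k => F (z k)) c.
Proof.
  intros HM Hcl. apply NNPP. intros Hno.
  assert (Hfar : exists e, 0 < e /\ forall N, exists k, (N <= k)%nat /\ e <= Rabs (F (z k) - c)).
  { apply NNPP. intros Hno2. apply Hno. intros e He. apply NNPP. intros Hno3.
    apply Hno2. exists e. split; auto. intros N. apply NNPP. intros Hno4.
    apply Hno3. exists N. intros k Hk. apply Rnot_le_lt. intros Hle. apply Hno4. eauto. }
  destruct Hfar as (e & He & Hfar).
  destruct (extract_subseq (fun _ k => e <= Rabs (F (z k) - c))) as (phi & Hphi & Hphi_far).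
  { intros _. apply Hfar. }
  destruct (bounded_subseq_vcv n (fun k => z (phi k)) M) as (v & psi & Hpsi & Hv); auto.
  assert (Hclv : cluster n z v)
    by (apply (cluster_of_subseq n z v (fun k => phi (psi k))); auto using strictly_increasing_comp).
  destruct (Hcl v Hclv) as [<- Hcont].
  destruct (cont_at_seq n F v _ Hcont Hv e He) as [N HN].
  specialize (HN N (le_n N)). specialize (Hphi_far (psi N)). unfold Rdist in HN. lra.
Qed.

Lemma clarke_ge_weaken n f x p c c' : clarke_ge n f x p c -> c' <= c -> clarke_ge n f x p c'.
Proof.
  intros H Hc e He r Hr. destruct (H e He r Hr) as (y & t & Hy & Ht & Hq).
  exists y, t. repeat split; auto; lra.
Qed.

Lemma vi_semiconvex_minimizer n lo hi a beta f zb gb :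
  semiconvex_on n f lo hi -> feas n lo hi a beta zb -> clarke_subdiff n f zb gb ->
  (forall x, feas n lo hi a beta x -> 0 <= dot n gb (vsub x zb)) ->
  forall x, feas n lo hi a beta x -> f zb <= f x.
Proof.
  intros Hsc Hzb Hsub Hvi x Hx. apply Hsc; [apply Hzb|apply Hx|].
  apply (clarke_ge_weaken n f zb _ (dot n gb (vsub x zb))); auto.
Qed.

Section Trajectory.

Variables (n : nat) (lo hi a : vec) (beta : R) (f : vec -> R).
Variables (lol hil al : nat -> vec) (betal : nat -> R).
Variables (fl : nat -> vec -> R) (gf : nat -> vec -> vec).
Variables (sigma theta : R) (dlt eps : nat -> R) (z : nat -> vec).

Hypothesis Ha : forall i, (i < n)%nat -> 0 < a i.
Hypothesis Hne : forall l, exists x, feas n (lol l) (hil l) (al l) (betal l) x.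
Hypothesis Hal : forall l i, (i < n)%nat -> 0 < al l i /\ lol l i < hil l i.
Hypothesis Hdata : forall i, (i < n)%nat ->
  Un_cv (fun l => lol l i) (lo i) /\ Un_cv (fun l => hil l i) (hi i) /\
  Un_cv (fun l => al l i) (a i).
Hypothesis Hbeta : Un_cv betal beta.
Hypothesis HA3 : forall (y : nat -> vec) (ybar : vec),
  (forall l, feas n (lol l) (hil l) (al l) (betal l) (y l)) -> vcv n y ybar ->
  exists gbar, clarke_subdiff n f ybar gbar /\ vcv n (fun l => gf l (y l)) gbar.
Hypothesis Htheta : 0 < theta < 1.
Hypothesis Hdlt : forall l, 0 < dlt l.
Hypothesis Hdlt0 : Un_cv dlt 0.
Hypothesis Heps : forall l, 0 < eps l.
Hypothesis Heps0 : Un_cv eps 0.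
Hypothesis Hz0 : feas n (lol O) (hil O) (al O) (betal O) (z O).
Hypothesis Hstage :
  forall l, bcv_stage n lol hil al betal fl gf sigma theta dlt eps (S l) (z l) (z (S l)).

Local Notation D := (feas n lo hi a beta).

Lemma iterates_feas l : feas n (lol l) (hil l) (al l) (betal l) (z l).
Proof.
  destruct l as [|l]; auto. destruct (Hstage l) as (x0 & [Hx0 _] & Hrt & _).
  exact (reachable_feas n lol hil al betal fl gf sigma theta dlt eps (S l)
           (Hal (S l)) Htheta (Hdlt _) (Heps _) x0 _ Hx0 Hrt).
Qed.

Lemma iterates_bounded : exists M, forall l i, (i < n)%nat -> Rabs (z l i) <= M.
Proof.
  apply coordwise_bounded. intros i Hi. destruct (Hdata i Hi) as (Hlo & Hhi & _).
  destruct (cv_bounded _ _ Hlo) as [B1 HB1]. destruct (cv_bounded _ _ Hhi) as [B2 HB2].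
  exists (B1 + B2). intros l. destruct (proj1 (iterates_feas l) i Hi).
  specialize (HB1 l). specialize (HB2 l). unfold Rabs in *. repeat destruct Rcase_abs; lra.
Qed.

Lemma cluster_exists : exists zb, cluster n z zb.
Proof.
  destruct iterates_bounded as [M HM].
  destruct (bounded_subseq_vcv n z M HM) as (zb & phi & Hphi & Hcv).
  exists zb. eapply cluster_of_subseq; eauto.
Qed.

Lemma cluster_feas zb : cluster n z zb -> D zb.
Proof.
  intros Hcl. destruct (subseq_of_cluster n z zb Hcl) as (phi & Hphi & Hcv).
  apply (feas_limit n lo hi a beta (fun k => lol (phi k)) (fun k => hil (phi k))
           (fun k => al (phi k)) (fun k => betal (phi k)) (fun k => z (phi k))); auto.
  - intros i Hi. destruct (Hdata i Hi) as (H1 & H2 & H3).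
    repeat split; apply (cv_subseq (fun l => _ l i)); auto.
  - now apply cv_subseq.
  - intros k. apply iterates_feas.
Qed.

(* If the multiplier condition failed at a cluster point, the pair (i, j) would be
   eligible at the end of infinitely many stages. *)
Lemma cluster_kkt zb : cluster n z zb -> exists gb, clarke_subdiff n f zb gb /\
  forall i j, (i < n)%nat -> (j < n)%nat -> lo i < zb i -> zb j < hi j ->
    gb i / a i <= gb j / a j.
Proof.
  intros Hcl. destruct (subseq_of_cluster n z zb Hcl) as (phi & Hphi & Hcv).
  destruct (feas_recovery_sequence n lo hi a beta lol hil al betal zb) as (w & Hw & Hwc); auto.
  { now apply cluster_feas. }
  destruct (splice_subseq n (fun l => feas n (lol l) (hil l) (al l) (betal l)) z w phi zb)
    as (y & Hy & Hyz & Hyc); auto using iterates_feas.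
  destruct (HA3 y zb Hy Hyc) as (gb & Hsub & Hgc). exists gb. split; auto.
  intros i j Hi Hj Hloi Hhij. apply Rnot_lt_le. intros Hlt.
  assert (Hsub_cv : forall (u : nat -> R) c, Un_cv u c -> Un_cv (fun s => u (phi s)) c)
    by (intros; now apply cv_subseq).
  assert (Hinv : forall k, (k < n)%nat -> Un_cv (fun s => / al (phi s) k) (/ a k))
    by (intros k Hk; apply cv_inv; [apply (Hsub_cv (fun l => al l k)), Hdata|]; auto;
        pose proof (Ha k Hk); lra).
  assert (Hratio : forall k, (k < n)%nat ->
            Un_cv (fun s => gf (phi s) (z (phi s)) k / al (phi s) k) (gb k / a k)).
  { intros k Hk. apply CV_mult; auto.
    pose proof (Hsub_cv _ _ (vcv_coord n _ _ k Hgc Hk)) as H. cbv beta in H.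
    intros e He. destruct (H e He) as [N HN]. exists N. intros s Hs. rewrite <- Hyz. auto. }
  assert (Hzc : forall k, (k < n)%nat -> Un_cv (fun s => z (phi s) k) (zb k))
    by (intros; now apply (vcv_coord n (fun s => z (phi s)))).
  assert (Hlo_i : Un_cv (fun s => lol (phi s) i + eps (phi s) / al (phi s) i) (lo i + 0 * / a i))
    by (apply CV_plus; [apply (Hsub_cv (fun l => lol l i)), Hdata; auto|apply CV_mult; auto]).
  assert (Hhi_j : Un_cv (fun s => hil (phi s) j - eps (phi s) / al (phi s) j) (hi j - 0 * / a j))
    by (apply CV_minus; [apply (Hsub_cv (fun l => hil l j)), Hdata; auto|apply CV_mult; auto]).
  destruct (cv_eventually_lt (fun s => dlt (phi s))
              (fun s => gf (phi s) (z (phi s)) i / al (phi s) i - gf (phi s) (z (phi s)) j / al (phi s) j)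
              0 (gb i / a i - gb j / a j)) as [N1 HN1]; [auto|apply CV_minus; auto|lra|].
  destruct (cv_eventually_lt _ _ _ _ Hlo_i (Hzc i Hi)) as [N2 HN2]; [lra|].
  destruct (cv_eventually_lt _ _ _ _ (Hzc j Hj) Hhi_j) as [N3 HN3]; [lra|].
  set (s := S (max N1 (max N2 N3))).
  specialize (HN1 s ltac:(lia)). specialize (HN2 s ltac:(lia)). specialize (HN3 s ltac:(lia)).
  pose proof (strictly_increasing_ge_id phi Hphi s) as Hs.
  destruct (phi s) as [|l] eqn:Hl; [unfold s in Hs; lia|].
  destruct (Hstage l) as (_ & _ & _ & Hstop). apply Hstop. exists i, j.
  unfold eligible, Iminus, Iplus, hq. repeat split; auto; lra.
Qed.

Lemma cluster_vi zb : cluster n z zb ->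
  D zb /\ exists gb, clarke_subdiff n f zb gb /\ forall x, D x -> 0 <= dot n gb (vsub x zb).
Proof.
  intros Hcl. pose proof (cluster_feas zb Hcl) as Hzb. split; auto.
  destruct (cluster_kkt zb Hcl) as (gb & Hsub & Hkkt).
  exists gb. split; auto. eapply kkt_implies_vi; eauto.
Qed.

Lemma cluster_minimizer zb : semiconvex_on n f lo hi -> cluster n z zb ->
  forall x, D x -> f zb <= f x.
Proof.
  intros Hsc Hcl. destruct (cluster_vi zb Hcl) as (Hzb & gb & Hsub & Hvi).
  eapply vi_semiconvex_minimizer; eauto.
Qed.

Hypothesis Hlip : forall x, inbox n lo hi x -> loc_lipschitz n f x.

(* All cluster points minimise f on D, so f takes one value on them. *)
Lemma values_converge : semiconvex_on n f lo hi ->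
  exists fstar, is_inf_on f D fstar /\ Un_cv (fun l => f (z l)) fstar.
Proof.
  intros Hsc. destruct cluster_exists as [zb Hcl]. pose proof (cluster_feas zb Hcl) as Hzb.
  exists (f zb). split.
  - split; [now apply cluster_minimizer|]. intros e He. exists zb. split; auto. lra.
  - destruct iterates_bounded as [M HM]. apply (cv_of_cluster_values n z M); auto.
    intros v Hv. pose proof (cluster_feas v Hv) as Hvf. split.
    + pose proof (cluster_minimizer v Hsc Hv zb Hzb).
      pose proof (cluster_minimizer zb Hsc Hcl v Hvf). lra.
    + apply loc_lipschitz_cont_at, Hlip, Hvf.
Qed.

Lemma trajectory_convergence :
  (exists zb, cluster n z zb) /\
  (forall zb, cluster n z zb ->
     D zb /\ exists gb, clarke_subdiff n f zb gb /\ forall x, D x -> 0 <= dot n gb (vsub x zb)) /\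
  (semiconvex_on n f lo hi ->
     (exists fstar, is_inf_on f D fstar /\ Un_cv (fun l => f (z l)) fstar) /\
     (forall zb, cluster n z zb -> D zb /\ forall x, D x -> f zb <= f x)).
Proof.
  split; [exact cluster_exists|]. split; [exact cluster_vi|].
  intros Hsc. split; [now apply values_converge|].
  intros zb Hcl. split; [now apply cluster_feas|now apply cluster_minimizer].
Qed.

End Trajectory.

Theorem theorem4p1
  (n : nat) (lo hi a : vec) (beta : R) (f : vec -> R)
  (lol hil al : nat -> vec) (betal : nat -> R)
  (fl : nat -> vec -> R) (gf : nat -> vec -> vec)
  (z0 : vec) (sigma theta : R) (dlt eps : nat -> R) :
  (* (A1) *)
  (exists x, feas n lo hi a beta x) ->
  (forall i, (i < n)%nat -> 0 < a i) ->
  (forall x, inbox n lo hi x -> loc_lipschitz n f x) ->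
  (* (A2) *)
  (forall l, exists x, feas n (lol l) (hil l) (al l) (betal l) x) ->
  (forall l i, (i < n)%nat -> 0 < al l i /\ lol l i < hil l i) ->
  (forall i, (i < n)%nat ->
     Un_cv (fun l => lol l i) (lo i) /\ Un_cv (fun l => hil l i) (hi i) /\
     Un_cv (fun l => al l i) (a i)) ->
  Un_cv betal beta ->
  (* (A3) *)
  (forall l, C1_near_box n (fl l) (gf l) (lol l) (hil l)) ->
  (forall (y : nat -> vec) (ybar : vec),
     (forall l, feas n (lol l) (hil l) (al l) (betal l) (y l)) ->
     vcv n y ybar ->
     exists gbar, clarke_subdiff n f ybar gbar /\ vcv n (fun l => gf l (y l)) gbar) ->
  feas n (lol O) (hil O) (al O) (betal O) z0 ->
  0 < sigma < 1 -> 0 < theta < 1 ->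
  (forall l, 0 < dlt l) -> Un_decreasing dlt -> Un_cv dlt 0 ->
  (forall l, 0 < eps l) -> Un_decreasing eps -> Un_cv eps 0 ->
  (* (i) *)
  (forall l z, bcv_gen n lol hil al betal fl gf sigma theta dlt eps z0 l z ->
     (exists x0, is_proj n (feas n (lol (S l)) (hil (S l)) (al (S l)) (betal (S l))) z x0) /\
     forall x0, is_proj n (feas n (lol (S l)) (hil (S l)) (al (S l)) (betal (S l))) z x0 ->
       (~ exists xs : nat -> vec, xs O = x0 /\
            forall k, bcv_step n lol hil al fl gf sigma theta dlt eps (S l) (xs k) (xs (S k))) /\
       (forall x, clos_refl_trans vec (bcv_step n lol hil al fl gf sigma theta dlt eps (S l)) x0 x ->
          bcv_stop n lol hil al gf dlt eps (S l) x \/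
          exists x', bcv_step n lol hil al fl gf sigma theta dlt eps (S l) x x'))
  /\
  (forall z : nat -> vec, z O = z0 ->
     (forall l, bcv_stage n lol hil al betal fl gf sigma theta dlt eps (S l) (z l) (z (S l))) ->
     (* (ii) *)
     (exists zbar, cluster n z zbar) /\
     (forall zbar, cluster n z zbar ->
        feas n lo hi a beta zbar /\
        exists gbar, clarke_subdiff n f zbar gbar /\
          forall x, feas n lo hi a beta x -> 0 <= dot n gbar (vsub x zbar)) /\
     (* (iii) *)
     (semiconvex_on n f lo hi ->
        (exists fstar, is_inf_on f (feas n lo hi a beta) fstar /\
                       Un_cv (fun l => f (z l)) fstar) /\
        (forall zbar, cluster n z zbar ->
           feas n lo hi a beta zbar /\
           forall x, feas n lo hi a beta x -> f zbar <= f x))).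
Proof.
  intros _ Ha Hlip Hne Hal Hdata Hbeta HC1 HA3 Hz0 Hsigma Htheta Hdlt _ Hdlt0 Heps _ Heps0.
  split.
  { intros l z _. apply stage_well_defined; auto. }
  intros z <- Hstage.
  apply (trajectory_convergence n lo hi a beta f lol hil al betal fl gf sigma theta dlt eps z); auto.
Qed.
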